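(* The matrix $\Gamma^{\mathrm{OB}}$ is $(m+1,1/m)$-admissible and implementable with complexity $m$ (with respect to learner actions $\mathcal B_m$, adversary actions = threshold vectors $\vec p\in[0,1]^k$, and payoff $u(\vec b,\vec p)$).
   Context: Online bidding in simultaneous second-price auctions with $k$ items: a bidder has valuation $v:\{0,1\}^k\to\{0,1/m,\dots,m/m\}$ with $v(\vec 0)=0$. Against a threshold vector $\vec p\in[0,1]^k$ (the highest competing bids), a bid vector $\vec b$ wins the bundle $\vec q(\vec b,\vec p)$ with $q_j=\mathbf 1(b_j>p_j)$ and has utility $u(\vec b,\vec p)=v(\vec q(\vec b,\vec p))-\vec p\cdot\vec q(\vec b,\vec p)$. $\mathcal B_m$ is the set of bid vectors $\vec b\in\{0,1/m,\dots,1\}^k$ satisfying no-overbidding: $\vec b\cdot\vec q\le v(\vec q)$ for all $\vec q\in\{0,1\}^k$. $\Gamma^{\mathrm{OB}}$ is the $|\mathcal B_m|\times k$ matrix with row $\Gamma^{\mathrm{OB}}_{\vec b}=\vec b$. A matrix $\Gamma$ is $(\kappa,\delta)$-admissible if its rows are distinct, each column has at most $\kappa$ distinct values, and distinct values within a column differ by at least $\delta$; it is implementable with complexity $M$ if for each column $j$ there is a finite set $S_j$ of pairs $(w,\vec p)$ with $w\ge0$, $|S_j|\le M$, and $\Gamma_{\vec b j}-\Gamma_{\vec b'j}=\sum_{(w,\vec p)\in S_j}w(u(\vec b,\vec p)-u(\vec b',\vec p))$ for all $\vec b,\vec b'\in\mathcal B_m$. *)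

From HB Require Import structures.
From mathcomp Require Import all_boot all_order all_algebra.
From Stdlib Require List.
Set Implicit Arguments. Unset Strict Implicit. Unset Printing Implicit Defensive.
Import Order.TTheory GRing.Theory Num.Theory.
Local Open Scope ring_scope.

Section Auction.
Variables (R : realFieldType) (k m : nat).

Definition bundle := {ffun 'I_k -> bool}.
Definition empty_bundle : bundle := [ffun => false].

(* grid values {0,1/m,...,m/m} are represented by their numerators in 'I_(m+1) *)
Definition gridval (a : 'I_m.+1) : R := (a%:R) / (m%:R).

Definition bid := {ffun 'I_k -> 'I_m.+1}.
Definition bidval (b : bid) (j : 'I_k) : R := gridval (b j).

Variable v : bundle -> 'I_m.+1.
Definition value (q : bundle) : R := gridval (v q).

Definition won (b : bid) (p : 'I_k -> R) : bundle := [ffun j => p j < bidval b j].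

Definition util (b : bid) (p : 'I_k -> R) : R :=
  value (won b p) - \sum_(j < k) (if won b p j then p j else 0).

Definition no_overbid (b : bid) : bool :=
  [forall q : bundle, \sum_(j < k) (if q j then bidval b j else 0) <= value q].

Definition Bm : {pred bid} := fun b => no_overbid b.

Definition GammaOB (b : bid) (j : 'I_k) : R := bidval b j.

Definition threshold (p : 'I_k -> R) : Prop := forall j, 0 <= p j <= 1.

End Auction.

Definition admissible (R : realFieldType) (T : finType) (k : nat) (A : {pred T})
  (G : T -> 'I_k -> R) (kappa : nat) (delta : R) : Prop :=
  (forall b b', b \in A -> b' \in A -> (forall j, G b j = G b' j) -> b = b') /\
  (forall j, (size (undup [seq G b j | b <- enum A]) <= kappa)%N) /\
  (forall j b b', b \in A -> b' \in A -> G b j != G b' j ->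
     delta <= `|G b j - G b' j|).

Definition implementable (R : realFieldType) (T : finType) (k : nat) (A : {pred T})
  (G : T -> 'I_k -> R) (u : T -> ('I_k -> R) -> R) (M : nat) : Prop :=
  forall j : 'I_k, exists S : seq (R * ('I_k -> R)),
    (size S <= M)%N /\
    (forall x, List.In x S -> 0 <= x.1 /\ threshold x.2) /\
    (forall b b', b \in A -> b' \in A ->
       G b j - G b' j = \sum_(x <- S) x.1 * (u b x.2 - u b' x.2)).

From HB Require Import structures.
From mathcomp Require Import all_boot all_order all_algebra.
From Stdlib Require List.

Set Implicit Arguments.
Unset Strict Implicit.
Unset Printing Implicit Defensive.
Import Order.TTheory GRing.Theory Num.Theory.
Local Open Scope ring_scope.

(* Admissibility is a property of the grid {0, 1/m, ..., 1}.  For implementability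
   of column j, probe with the thresholds p_i = (i/m on item j, 1 elsewhere),
   i < m.  Against p_i a bid wins at most item j, and wins it iff b_j > i/m,
   with utility v(e_j) - i/m, which is positive by no-overbidding.  Weighting p_i
   by (1/m) / (v(e_j) - i/m) turns each utility into the indicator (1/m)[b_j > i/m],
   and these indicators sum to b_j. *)

Lemma In_mem (T : eqType) (x : T) (s : seq T) : List.In x s -> x \in s.
Proof. by elim: s => //= y s IHs [->|/IHs]; rewrite inE ?eqxx // => ->; rewrite orbT. Qed.

Section Grid.
Variables (R : realFieldType) (m : nat).
Hypothesis m_gt0 : (0 < m)%N.

Let mR_gt0 : 0 < (m%:R : R).
Proof. by rewrite ltr0n. Qed.

Lemma ltr_gridval (a : nat) (b : 'I_m.+1) :
  ((a%:R / m%:R : R) < gridval R b) = (a < b)%N.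
Proof. by rewrite /gridval ltr_pM2r ?invr_gt0 // ltr_nat. Qed.

Lemma natr_div_le1 (a : nat) : (a <= m)%N -> (a%:R / m%:R : R) <= 1.
Proof. by move=> am; rewrite ler_pdivrMr // mul1r ler_nat. Qed.

Lemma gridval_le1 (b : 'I_m.+1) : gridval R b <= 1.
Proof. by apply: natr_div_le1; rewrite -ltnS. Qed.

Lemma gridval_inj : injective (@gridval R m).
Proof.
move=> a b; rewrite /gridval => /(mulIf (invr_neq0 (lt0r_neq0 mR_gt0))) /eqP.
by rewrite eqr_nat => /eqP /val_inj.
Qed.

Lemma ler1_dist_nat (a b : nat) : a != b -> 1 <= `|a%:R - b%:R : R|.
Proof.
move=> ab; have [lt|gt|eq] := ltngtP a b; last by rewrite eq eqxx in ab.
- by rewrite distrC -(natrB _ (ltnW lt)) normr_nat ler1n subn_gt0.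
- by rewrite -(natrB _ (ltnW gt)) normr_nat ler1n subn_gt0.
Qed.

Lemma gridval_sep (a b : 'I_m.+1) :
  gridval R a != gridval R b -> 1 / m%:R <= `|gridval R a - gridval R b|.
Proof.
move=> neq; have /ler1_dist_nat ab : (a : nat) != b.
  by apply: contra neq => /eqP/val_inj ->.
rewrite /gridval -mulrBl normrM [`|_^-1|]ger0_norm ?invr_ge0 ?ler0n //.
by rewrite mul1r ler_pMl ?invr_gt0.
Qed.

Lemma sumr_grid_indicator (a : 'I_m.+1) :
  \sum_(i <- iota 0 m) (if (i < a)%N then 1 / m%:R else 0) = gridval R a.
Proof.
have am : (a <= m)%N by rewrite -ltnS.
have -> : iota 0 m = index_iota 0 m by rewrite /index_iota subn0.
rewrite (big_cat_nat (leq0n a) am) /=.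
rewrite (eq_big_nat _ _ (F2 := fun _ => 1 / m%:R)); last by move=> i /andP[_ ->].
rewrite [X in _ + X]big1_seq ?addr0; last first.
  by move=> i /andP[_]; rewrite mem_index_iota => /andP[ai _]; rewrite ltnNge ai.
by rewrite sumr_const_nat subn0 /gridval div1r mulr_natl.
Qed.

End Grid.

Section Probes.
Variables (R : realFieldType) (k m : nat) (v : bundle k -> 'I_m.+1).
Hypothesis m_gt0 : (0 < m)%N.
Hypothesis v_empty : nat_of_ord (v (empty_bundle k)) = 0%N.

Definition unit_bundle (j : 'I_k) : bundle k := [ffun i => i == j].

Lemma sum_unit_bundle (j : 'I_k) (F : 'I_k -> R) :
  \sum_(i < k) (if unit_bundle j i then F i else 0) = F j.
Proof.
under eq_bigr => i _ do rewrite ffunE.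
by rewrite -big_mkcond big_pred1_eq.
Qed.

Lemma bidval_le_value (b : bid k m) (j : 'I_k) :
  b \in Bm R v -> bidval R b j <= value R v (unit_bundle j).
Proof. by rewrite unfold_in => /forallP /(_ (unit_bundle j)); rewrite sum_unit_bundle. Qed.

Definition probe (j : 'I_k) (i : nat) : 'I_k -> R :=
  fun l => if l == j then i%:R / m%:R else 1.

Definition probe_weight (j : 'I_k) (i : nat) : R :=
  let gap := value R v (unit_bundle j) - i%:R / m%:R in
  if 0 < gap then (1 / m%:R) / gap else 0.

Lemma probe_threshold (j : 'I_k) (i : nat) :
  (i <= m)%N -> threshold (probe j i).
Proof.
move=> im l; rewrite /probe; case: ifP => _; last by rewrite ler01 lexx.
by rewrite natr_div_le1 // andbT divr_ge0 ?ler0n.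
Qed.

Lemma probe_weight_ge0 (j : 'I_k) (i : nat) : 0 <= probe_weight j i.
Proof.
rewrite /probe_weight; case: ifP => // /ltW gap_ge0.
by rewrite divr_ge0 // divr_ge0 ?ler01 ?ler0n.
Qed.

Lemma won_probe (b : bid k m) (j : 'I_k) (i : nat) :
  won b (probe j i) = if (i < b j)%N then unit_bundle j else empty_bundle k.
Proof.
apply/ffunP => l; rewrite !ffunE /probe /bidval.
case: (eqVneq l j) => [->|lj].
  by rewrite ltr_gridval //; case: ltnP; rewrite ffunE ?eqxx.
by rewrite ltNge gridval_le1 //; case: ltnP; rewrite ffunE // (negbTE lj).
Qed.

Lemma weighted_util_probe (b : bid k m) (j : 'I_k) (i : nat) : b \in Bm R v ->
  probe_weight j i * util v b (probe j i) = if (i < b j)%N then 1 / m%:R else 0.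
Proof.
move=> bB; rewrite /util won_probe; case: ltnP => ib.
  rewrite sum_unit_bundle /probe eqxx.
  have gap_gt0 : 0 < value R v (unit_bundle j) - i%:R / m%:R.
    rewrite subr_gt0; apply: lt_le_trans (bidval_le_value j bB).
    by rewrite ltr_gridval.
  by rewrite /probe_weight gap_gt0 divfK ?gt_eqF.
rewrite big1 => [|l _]; last by rewrite ffunE.
by rewrite /value /gridval v_empty mul0r subr0 mulr0.
Qed.

End Probes.

Lemma GammaOB_admissible (R : realFieldType) (k m : nat) (m_gt0 : (0 < m)%N)
  (v : bundle k -> 'I_m.+1) :
  admissible (Bm R v) (GammaOB R (m:=m)) m.+1 (1 / m%:R).
Proof.
split; [|split].
- by move=> b b' _ _ eq_rows; apply/ffunP => j; exact: gridval_inj (eq_rows j).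
- move=> j; apply: leq_trans (_ : size (map (@gridval R m) (enum 'I_m.+1)) <= _)%N.
    apply: uniq_leq_size => [|x]; first exact: undup_uniq.
    by rewrite mem_undup => /mapP[b _ ->]; apply: map_f; rewrite mem_enum.
  by rewrite size_map size_enum_ord.
- by move=> j b b' _ _; exact: gridval_sep.
Qed.

Lemma GammaOB_implementable (R : realFieldType) (k m : nat) (m_gt0 : (0 < m)%N)
  (v : bundle k -> 'I_m.+1) (v_empty : nat_of_ord (v (empty_bundle k)) = 0%N) :
  implementable (Bm R v) (GammaOB R (m:=m)) (util v) m.
Proof.
move=> j; exists [seq (probe_weight R v j i, probe R m j i) | i <- iota 0 m].
split; [by rewrite size_map size_iota | split].
- move=> x /List.in_map_iff[i [<- /In_mem]]; rewrite mem_iota add0n => /andP[_ im].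
  split; [exact: probe_weight_ge0 | exact: (probe_threshold R m_gt0 j (ltnW im))].
- move=> b b' bB b'B; rewrite big_map.
  under eq_bigr => i _ do rewrite /= mulrBr !(weighted_util_probe m_gt0 v_empty) //.
  by rewrite sumrB !sumr_grid_indicator.
Qed.

Theorem lemma6p2 (R : realFieldType) (k m : nat) (hm : (0 < m)%N)
  (v : bundle k -> 'I_m.+1) (hv : nat_of_ord (v (empty_bundle k)) = 0%N) :
  admissible (Bm R v) (GammaOB R (m:=m)) m.+1 (1 / m%:R) /\
  implementable (Bm R v) (GammaOB R (m:=m)) (util v) m.
Proof.
split; [exact: GammaOB_admissible | exact: GammaOB_implementable].
Qed.
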